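(* Let $G$ be a finite group, $p$ a prime, and $B_0$ the principal $p$-block of $G$. Let $\chi, \psi \in \mathrm{Irr}(B_0)$ with $p \nmid \chi(1)$ and suppose that the product $\chi\psi$ is irreducible. Then $\chi\psi \in \mathrm{Irr}(B_0)$. *)

From mathcomp Require Import all_boot all_order all_algebra all_fingroup all_solvable all_field all_character.
Set Implicit Arguments. Unset Strict Implicit. Unset Printing Implicit Defensive.
Import GRing.Theory Num.Theory.
Local Open Scope ring_scope.

(* A maximal ideal M of the ring Aint of algebraic integers (inside algC)
   containing the prime p.  Following Navarro, "Characters and blocks of
   finite groups", blocks are defined with respect to such an M. *)
Definition max_ideal_over (p : nat) (M : pred algC) : Prop :=
  {subset M <= Aint} /\
  0 \in M /\
  {in M &, forall a b, a + b \in M} /\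
  {in Aint & M, forall r a, r * a \in M} /\
  1 \notin M /\
  {in Aint, forall a, a \notin M ->
     exists r, exists m, [/\ r \in Aint, m \in M & 1 = r * a + m]} /\
  (p%:R : algC) \in M.

Definition central_char (gT : finGroupType) (G : {group gT})
  (chi : 'CF(G)) (K : {set gT}) : algC :=
  #|K|%:R * chi (repr K) / chi 1%g.

(* chi lies in the principal block (w.r.t. M) iff its central character
   agrees mod M with that of the trivial character, omega_1(K^) = |K|,
   on every conjugacy class K of G. *)
Definition in_principal_block (M : pred algC) (gT : finGroupType)
  (G : {group gT}) (chi : 'CF(G)) : Prop :=
  chi \in irr G /\
  forall K, K \in classes G -> central_char chi K - #|K|%:R \in M.

From mathcomp Require Import all_boot all_order all_algebra all_fingroup all_solvable all_field all_character.
From mathcomp Require Import ring.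
Set Implicit Arguments. Unset Strict Implicit. Unset Printing Implicit Defensive.
Import GRing.Theory Num.Theory.
Local Open Scope ring_scope.

(* With x in K, the central characters satisfy
     chi(1) (omega_{chi psi}(K) - |K|)
       = chi(x) (omega_psi(K) - |K|) + chi(1) (omega_chi(K) - |K|),
   so the left side lies in M.  Since p does not divide chi(1), chi(1) is a
   unit modulo the maximal ideal M, hence omega_{chi psi}(K) = |K| mod M. *)

Section MaximalIdeal.

Variables (p : nat) (M : pred algC).
Hypothesis maxM : max_ideal_over p M.

Lemma max_ideal_combination a b u v :
  a \in Aint -> b \in Aint -> u \in M -> v \in M -> a * u + b * v \in M.
Proof.
have [_ [_ [MD [MM _]]]] := maxM.
by move=> Aa Ab Mu Mv; apply: MD; apply: MM.
Qed.

Lemma natr_notin_max_ideal n : prime p -> ~~ (p %| n)%N -> n%:R \notin M.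
Proof.
move=> pr_p p_ndvd_n; apply/negP=> Mn.
have [_ [_ [_ [_ [M1 [_ Mp]]]]]] := maxM.
have [u _] := Bezoutl n (prime_gt0 pr_p).
rewrite (eqP (_ : coprime p n)) ?prime_coprime // => /dvdnP[q Dq].
have Bezout1 : 1 = q%:R * p%:R + (- u%:R) * n%:R :> algC.
  by rewrite -natrM -Dq natrD natrM mulNr addrK.
by move/negP: M1; apply; rewrite {1}Bezout1 max_ideal_combination ?rpredN ?rpred_nat.
Qed.

Lemma max_ideal_cancel_l a y :
  a \in Aint -> a \notin M -> y \in Aint -> a * y \in M -> y \in M.
Proof.
have [_ [_ [_ [_ [_ [Minv _]]]]]] := maxM.
move=> Aa Ma Ay May; have [r [m [Ar Mm Dr]]] := Minv a Aa Ma.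
have -> : y = r * (a * y) + y * m by rewrite mulrA [y * m]mulrC -mulrDl -Dr mul1r.
by rewrite max_ideal_combination.
Qed.

End MaximalIdeal.

Lemma Aint_central_char_irr (gT : finGroupType) (G : {group gT}) (chi : 'CF(G)) K :
  chi \in irr G -> K \in classes G -> central_char chi K \in Aint.
Proof.
move=> /irrP[i ->] /repr_classesP[GxK DK].
by rewrite /central_char {1}DK Aint_class_div_irr1.
Qed.

Lemma central_char_mul_sub (gT : finGroupType) (G : {group gT}) (chi psi : 'CF(G)) K :
  chi 1%g != 0 -> psi 1%g != 0 ->
  chi 1%g * (central_char (chi * psi) K - #|K|%:R)
    = chi (repr K) * (central_char psi K - #|K|%:R)
      + chi 1%g * (central_char chi K - #|K|%:R).
Proof.
by move=> chi1_neq0 psi1_neq0; rewrite /central_char !cfunE; field; apply/andP.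
Qed.

Theorem lemma2p3 (gT : finGroupType) (G : {group gT}) (p : nat)
  (M : pred algC) (pr_p : prime p) (HM : max_ideal_over p M)
  (chi psi : 'CF(G))
  (Hchi : in_principal_block M chi) (Hpsi : in_principal_block M psi)
  (Hdeg : ~~ (p %| Num.truncn (chi 1%g))%N)
  (Hirr : chi * psi \in irr G) :
  in_principal_block M (chi * psi).
Proof.
case: Hchi Hpsi => [/irrP[i ->] omega_chi] [/irrP[j ->] omega_psi] in Hdeg Hirr *.
split=> // K KG; apply: (max_ideal_cancel_l HM (a := 'chi_i 1%g)).
- exact: Aint_irr.
- by rewrite -(truncnK (Cnat_irr1 i)) (natr_notin_max_ideal HM).
- by rewrite rpredB ?Aint_central_char_irr ?rpred_nat.
rewrite central_char_mul_sub ?irr1_neq0 //.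
by rewrite (max_ideal_combination HM) ?Aint_irr ?omega_chi ?omega_psi.
Qed.
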